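(* A vector configuration $V$ satisfies $\mathrm{DD}(V)=0$ if and only if it is centrally symmetric up to rescaling, i.e. its nonzero elements can be partitioned into pairs of the form $\{v,-\lambda v\}$ with $\lambda>0$.
   Context: A vector configuration is a finite family (repetitions allowed) $V$ of vectors in $\mathbb{R}^r$; cardinalities count multiplicities. Covector discrepancy: $\mathrm{DD}(V)=\max_f\big|\,|\{v\in V: f(v)>0\}|-|\{v\in V:f(v)<0\}|\,\big|$ over all linear functionals $f$ on $\mathbb{R}^r$. Copies of the zero vector are ignored in the notion of central symmetry. *)

From HB Require Import structures.
From mathcomp Require Import all_boot all_order all_algebra.
From mathcomp Require Import boolp reals.
Set Implicit Arguments. Unset Strict Implicit. Unset Printing Implicit Defensive.
Import Order.TTheory GRing.Theory Num.Theory.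
Local Open Scope ring_scope.

(* A vector configuration in R^r with n members (repetitions allowed) is
   V : 'I_n -> 'rV[R]_r.  Linear functionals: {linear 'rV[R]_r -> R^o}. *)

Definition npos (R : realType) (r n : nat) (V : 'I_n -> 'rV[R]_r)
  (f : {linear 'rV[R]_r -> R^o}) : nat := #|[set i | 0 < f (V i)]|.

Definition nneg (R : realType) (r n : nat) (V : 'I_n -> 'rV[R]_r)
  (f : {linear 'rV[R]_r -> R^o}) : nat := #|[set i | f (V i) < 0]|.

Definition disc (R : realType) (r n : nat) (V : 'I_n -> 'rV[R]_r)
  (f : {linear 'rV[R]_r -> R^o}) : nat :=
  `|(npos V f)%:Z - (nneg V f)%:Z|%N.

(* DD(V) = max over linear functionals f of disc V f; values lie in [0, n]. *)
Definition DD (R : realType) (r n : nat) (V : 'I_n -> 'rV[R]_r) : nat :=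
  \max_(k < n.+1 | `[< exists f : {linear 'rV[R]_r -> R^o}, disc V f = k >]) k.

Definition centrally_symmetric_up_to_rescaling (R : realType) (r n : nat)
  (V : 'I_n -> 'rV[R]_r) : Prop :=
  exists P : {set {set 'I_n}},
    partition P [set i | V i != 0] /\
    forall B, B \in P ->
      exists i j : 'I_n, [/\ i != j, B = [set i; j] &
        exists lambda : R, 0 < lambda /\ V j = - (lambda *: V i)].

(* Under the pairing, the two members of each pair get opposite signs from every
   functional, so every discrepancy vanishes.  Conversely, fix a nonzero [v = V i],
   a functional [u] with [u v = 1], and a functional [phi] vanishing on the line
   [R v] but on no member of [V] off that line (a generic choice).  For small
   [e > 0] the functionals [phi + e u] and [phi - e u] have the sign of [phi] off
   the line and the signs [+- sg u] on it, so subtracting their two vanishing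
   discrepancies shows that [V] contains as many positive as negative multiples
   of [v].  With these rays balanced, the nonzero members are matched off in
   antipodal pairs one pair at a time. *)

From HB Require Import structures.
From mathcomp Require Import all_boot all_order all_algebra.
From mathcomp Require Import boolp reals.
From mathcomp Require Import zify lra.
Import Order.TTheory GRing.Theory Num.Theory.
Set Implicit Arguments. Unset Strict Implicit.
Local Open Scope ring_scope.

Section SignSums.
Variables (R : realFieldType) (I : finType).

Lemma sumr_indicator (P Q : pred I) :
  \sum_(l | P l) (Q l)%:R = #|[set l | P l & Q l]|%:R :> R.
Proof.
rewrite -sum1_card natr_sum big_mkcond [RHS]big_mkcond.
by apply: eq_bigr => l _; rewrite inE; case: (P l); case: (Q l).
Qed.

Lemma sum_sgr (P : pred I) (h : I -> R) :
  \sum_(l | P l) Num.sg (h l) =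
    #|[set l | P l & 0 < h l]|%:R - #|[set l | P l & h l < 0]|%:R.
Proof.
have sgE (x : R) : Num.sg x = (0 < x)%R%:R - (x < 0)%R%:R.
  by case: sgrP; rewrite ?subr0 ?sub0r.
by rewrite (eq_bigr _ (fun l _ => sgE (h l))) sumrB !sumr_indicator.
Qed.

Lemma exists_small_pos (P : pred I) (a b : I -> R) :
  (forall l, P l -> 0 < b l) ->
  exists2 e : R, 0 < e & forall l, P l -> e * `|a l| < b l.
Proof.
move=> b_gt0; case: (pickP P) => [l0 Pl0|noP]; last by exists 1 => // l; rewrite noP.
pose q l := b l / (`|a l| + 1).
have q_gt0 l : P l -> 0 < q l by move=> Pl; rewrite divr_gt0 ?b_gt0 ?ltr_wpDl.
case: (arg_minP q Pl0) => m Pm min_m.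
exists (q m); first exact: q_gt0.
move=> l Pl; apply: (le_lt_trans (y := q l * `|a l|)).
  by rewrite ler_wpM2r ?min_m.
rewrite /q mulrAC ltr_pdivrMr ?ltr_wpDl // ltr_pM2l ?b_gt0 //.
by rewrite ltrDl.
Qed.

Lemma sgrD_small (x y : R) : `|y| < `|x| -> Num.sg (x + y) = Num.sg x.
Proof.
move=> lt_yx; have := ler_norm y; have := ler_norm (- y); rewrite normrN.
case: (sgrP x) lt_yx => x_sgn lt_yx ? ?.
- by have := normr_ge0 y; lra.
- by apply: gtr0_sg; lra.
- by apply: ltr0_sg; lra.
Qed.

(* Perturbing by [+- e] with [e] small leaves the sign of [phi l] unchanged
   where it is nonzero; subtracting the two sums isolates the zeros of [phi]. *)
Lemma sum_sgr_kernel (phi al : I -> R) :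
  (forall t, \sum_l Num.sg (phi l + t * al l) = 0) ->
  \sum_(l | phi l == 0) Num.sg (al l) = 0.
Proof.
move=> sum_eq0.
have [e e_gt0 small_e] :
    exists2 e : R, 0 < e & forall l, phi l != 0 -> e * `|al l| < `|phi l|.
  by apply: exists_small_pos => l; rewrite normr_gt0.
have splitE s : s = e \/ s = - e ->
  \sum_l Num.sg (phi l + s * al l) =
  Num.sg s * \sum_(l | phi l == 0) Num.sg (al l) +
  \sum_(l | phi l != 0) Num.sg (phi l).
  move=> es; rewrite (bigID (fun l => phi l == 0)) /= mulr_sumr; congr (_ + _).
    by apply: eq_bigr => l /eqP ->; rewrite add0r sgrM.
  apply: eq_bigr => l phi_l; apply: sgrD_small; rewrite normrM.
  have -> : `|s| = e by case: es => ->; rewrite ?normrN gtr0_norm.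
  exact: small_e.
have := congr2 (fun x y => x - y) (sum_eq0 e) (sum_eq0 (- e)).
rewrite /= !splitE; [|by right|by left].
by rewrite sgrN gtr0_sg //; lra.
Qed.

End SignSums.

Section Discrepancy.
Variables (R : realType) (r n : nat) (V : 'I_n -> 'rV[R]_r).

Lemma disc_eq0 (f : {linear 'rV[R]_r -> R^o}) :
  disc V f = 0%N <-> \sum_l Num.sg (f (V l)) = 0.
Proof.
rewrite (sum_sgr xpredT) /disc /npos /nneg /=; split.
  by move/eqP; rewrite absz_eq0 subr_eq0 eqz_nat => /eqP ->; rewrite subrr.
by move/eqP; rewrite subr_eq0 eqr_nat => /eqP ->; rewrite subrr.
Qed.

Lemma disc_le (f : {linear 'rV[R]_r -> R^o}) : (disc V f <= n)%N.
Proof.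
have := max_card [set i | 0 < f (V i)]; have := max_card [set i | f (V i) < 0].
rewrite card_ord /disc /npos /nneg; lia.
Qed.

Lemma DD_eq0P : DD V = 0%N <-> forall f : {linear 'rV[R]_r -> R^o}, disc V f = 0%N.
Proof.
split=> [DD0 f|disc0]; last by apply: big1 => k /asboolP [f <-].
apply/eqP; rewrite -leqn0 -DD0.
have disc_lt : (disc V f < n.+1)%N by rewrite ltnS disc_le.
apply: (leq_bigmax_cond (Ordinal disc_lt) (F := fun k : 'I_n.+1 => nat_of_ord k)).
by apply/asboolP; exists f.
Qed.

Lemma centrally_symmetric_DD_eq0 :
  centrally_symmetric_up_to_rescaling V -> DD V = 0%N.
Proof.
move=> [P [/and3P [/eqP coverP trivP _] pairsP]]; apply/DD_eq0P => f; apply/disc_eq0.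
rewrite (bigID (mem [set i | V i != 0])) /= [X in _ + X]big1 ?addr0; last first.
  by move=> l; rewrite inE negbK => /eqP ->; rewrite linear0 sgr0.
rewrite -coverP big_trivIset //=.
apply: big1 => B /pairsP [i [j [ij -> [lambda [lambda_gt0 Vj]]]]].
rewrite big_setU1 ?inE //= big_set1 Vj linearN linearZ /=.
by rewrite sgrN sgrM (gtr0_sg lambda_gt0) mul1r subrr.
Qed.

End Discrepancy.

Section Rays.
Variables (R : realFieldType) (r : nat).
Implicit Types (x y : 'rV[R]_r).

Definition pos_multiple x y : bool := `[< exists2 mu : R, 0 < mu & x = mu *: y >].

Lemma pos_multipleP x y :
  reflect (exists2 mu : R, 0 < mu & x = mu *: y) (pos_multiple x y).
Proof. exact: asboolP. Qed.

Lemma pos_multiple_refl x : pos_multiple x x.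
Proof. by apply/pos_multipleP; exists 1; rewrite ?scale1r. Qed.

Lemma pos_multipleZl (nu : R) x y :
  0 < nu -> pos_multiple (nu *: x) y = pos_multiple x y.
Proof.
move=> nu_gt0; apply/pos_multipleP/pos_multipleP => -[mu mu_gt0 def_x].
  exists (nu^-1 * mu); first by rewrite mulr_gt0 ?invr_gt0.
  by rewrite -scalerA -def_x scalerA mulVf ?gt_eqF ?scale1r.
by exists (nu * mu); rewrite ?mulr_gt0 // def_x scalerA.
Qed.

Lemma pos_multiple_neq0 x y : y != 0 -> pos_multiple x y -> x != 0.
Proof.
by move=> y_neq0 /pos_multipleP [mu mu_gt0 ->]; rewrite scaler_eq0 negb_or gt_eqF.
Qed.

Lemma pos_multipleN_self x : x != 0 -> ~~ pos_multiple (- x) x.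
Proof.
move=> x_neq0; apply/pos_multipleP => -[mu mu_gt0 /eqP].
rewrite -subr_eq0 -opprD -{1}[x]scale1r -scalerDl oppr_eq0 scaler_eq0.
by rewrite (negbTE x_neq0) orbF gt_eqF // addr_gt0.
Qed.

End Rays.

Section Pairing.
Variables (R : realFieldType) (r n : nat) (V : 'I_n -> 'rV[R]_r).

Definition pos_ray k := [set l | pos_multiple (V l) (V k)].
Definition neg_ray k := [set l | pos_multiple (- V l) (V k)].

Lemma pos_ray_sub k : V k != 0 -> pos_ray k \subset [set l | V l != 0].
Proof.
by move=> Vk_neq0; apply/subsetP => l; rewrite !inE; apply: pos_multiple_neq0.
Qed.

Lemma neg_ray_sub k : V k != 0 -> neg_ray k \subset [set l | V l != 0].
Proof.
move=> Vk_neq0; apply/subsetP => l; rewrite !inE -oppr_eq0.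
exact: pos_multiple_neq0.
Qed.

Definition antipodal_pair (B : {set 'I_n}) : Prop :=
  exists i j : 'I_n, [/\ i != j, B = [set i; j] &
    exists lambda : R, 0 < lambda /\ V j = - (lambda *: V i)].

Definition ray_balanced (A : {set 'I_n}) :=
  forall k, k \in A -> #|pos_ray k :&: A| = #|neg_ray k :&: A|.

Lemma antipodal_ray_count k i j (nu : R) : 0 < nu -> V j = - (nu *: V i) ->
  ((i \in pos_ray k) + (j \in pos_ray k) = (i \in neg_ray k) + (j \in neg_ray k))%N.
Proof.
move=> nu_gt0 Vj; rewrite !inE addnC; congr (_ + _)%N.
  by rewrite Vj -scalerN pos_multipleZl.
by rewrite Vj opprK pos_multipleZl.
Qed.

Lemma card_setI_pair (X A : {set 'I_n}) i j : i \in A -> j \in A -> i != j ->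
  #|X :&: A| = ((i \in X) + (j \in X) + #|X :&: (A :\ i :\ j)|)%N.
Proof.
move=> iA jA ij; rewrite (cardsD1 i (X :&: A)) (cardsD1 j (X :&: A :\ i)).
rewrite !setIDA !inE iA jA eq_sym ij !andbT addnA.
by congr (_ + _ + #|_|)%N; apply/setP => x; rewrite !inE; case: (x == j); case: (x == i).
Qed.

Lemma ray_balancedD2 A i j (nu : R) : ray_balanced A ->
  i \in A -> j \in A -> i != j -> 0 < nu -> V j = - (nu *: V i) ->
  ray_balanced (A :\ i :\ j).
Proof.
move=> balA iA jA ij nu_gt0 Vj k; rewrite !inE => /and3P [_ _ kA].
have := balA k kA; rewrite !(card_setI_pair _ iA jA ij).
by rewrite (antipodal_ray_count k nu_gt0 Vj) => /addnI.
Qed.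

Lemma exists_antipode (A : {set 'I_n}) i :
  {in A, forall k, V k != 0} -> ray_balanced A -> i \in A -> exists j, exists2 nu : R,
    [/\ j \in A, i != j & 0 < nu] & V j = - (nu *: V i).
Proof.
move=> nzA balA iA.
have : (0 < #|neg_ray i :&: A|)%N.
  by rewrite -balA // card_gt0; apply/set0Pn; exists i; rewrite !inE pos_multiple_refl.
rewrite card_gt0 => /set0Pn [j]; rewrite !inE => /andP [ray_j jA].
have [nu nu_gt0 Vj] := pos_multipleP _ _ ray_j.
exists j, nu; last by rewrite -Vj opprK.
split=> //; apply: contraTneq ray_j => <-; exact: pos_multipleN_self (nzA i iA).
Qed.

Lemma ray_balanced_partition (A : {set 'I_n}) :
  {in A, forall k, V k != 0} -> ray_balanced A ->
  exists P : {set {set 'I_n}},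
    partition P A /\ forall B, B \in P -> antipodal_pair B.
Proof.
move: {2}#|A| (leqnn #|A|) => m; elim: m A => [|m IH] A leAm nzA balA.
  move: leAm; rewrite leqn0 cards_eq0 => /eqP ->.
  by exists set0; rewrite partition_set0; split=> // B; rewrite inE.
have [->|[i iA]] := set_0Vmem A.
  by exists set0; rewrite partition_set0; split=> // B; rewrite inE.
have [j [nu [jA ij nu_gt0] Vj]] := exists_antipode nzA balA iA.
have [|||P' [partP' pairsP']] := IH (A :\ i :\ j).
- have := cardsD1 i A; have := cardsD1 j (A :\ i).
  rewrite iA !inE jA eq_sym ij /= => card_Ai card_A.
  by move: leAm; rewrite card_A card_Ai !add1n ltnS => /ltnW.
- by move=> k; rewrite !inE => /and3P [_ _ /nzA].
- exact: ray_balancedD2 balA iA jA ij nu_gt0 Vj.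
exists ([set i; j] |: P'); split.
  have -> : A = [set i; j] :|: A :\ i :\ j.
    apply/setP => x; rewrite !inE.
    by case: (eqVneq x i) => [->|_] //=; case: (eqVneq x j) => [->|_].
  apply: partitionU1 => //; first by apply/set0Pn; exists i; rewrite !inE eqxx.
  rewrite disjoints_subset; apply/subsetP => x; rewrite !inE.
  by case/orP => /eqP ->; rewrite eqxx ?andbF.
move=> B; rewrite in_setU1 => /orP [/eqP ->|/pairsP'] //.
by exists i, j; split=> //; exists nu.
Qed.

End Pairing.

Section DotProduct.
Variables (R : realFieldType) (r : nat).

Definition dotr (d x : 'rV[R]_r) : R^o := \sum_k x 0 k * d 0 k.

Lemma dotr_is_linear d : linear (dotr d).
Proof.
move=> a x y; rewrite /dotr scaler_sumr -big_split /=; apply: eq_bigr => k _.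
by rewrite !mxE mulrDl -mulrA.
Qed.

End DotProduct.

HB.instance Definition _ (R : realFieldType) (r : nat) (d : 'rV[R]_r) :=
  GRing.isLinear.Build R 'rV[R]_r R^o _ (dotr d) (dotr_is_linear d).

Section DotProductTheory.
Variables (R : realFieldType) (r : nat).
Implicit Types (a : R) (c d u v x : 'rV[R]_r).

Lemma dotrC d x : dotr d x = dotr x d.
Proof. by apply: eq_bigr => k _; rewrite mulrC. Qed.

Lemma dotrZr a d x : dotr d (a *: x) = a * dotr d x.
Proof. exact: linearZ. Qed.

Lemma dotrZl a d x : dotr (a *: d) x = a * dotr d x.
Proof. by rewrite dotrC dotrZr dotrC. Qed.

Lemma dotrDl c d x : dotr (c + d) x = dotr c x + dotr d x.
Proof. by rewrite dotrC linearD /= !(dotrC x). Qed.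

Lemma dotrBl c d x : dotr (c - d) x = dotr c x - dotr d x.
Proof. by rewrite dotrC linearB /= !(dotrC x). Qed.

Lemma dotr_self_gt0 x : x != 0 -> 0 < dotr x x.
Proof.
move=> x_neq0; have sq_ge0 k : 0 <= x 0 k * x 0 k by rewrite -expr2 sqr_ge0.
rewrite lt_def sumr_ge0 // andbT; apply: contraNneq x_neq0 => /psumr_eq0P sq0.
apply/eqP/rowP => k; apply/eqP; rewrite mxE -sqrf_eq0 expr2; exact/eqP/sq0.
Qed.

Lemma exists_nonroot (Q : {poly R}) : Q != 0 -> exists t, ~~ root Q t.
Proof.
move=> Q_neq0; apply/not_existsP => all_roots.
have := max_poly_roots Q_neq0 (rs := [seq (k%:R : R) | k <- iota 0 (size Q)]).
rewrite size_map size_iota ltnn => max_roots; suff: false by []; apply: max_roots.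
  by apply/allP => x _; apply/negPn/negP => /(all_roots x).
by rewrite map_inj_uniq ?iota_uniq // => x y /eqP; rewrite eqr_nat => /eqP.
Qed.

(* [dotr (row of powers of t) w] is a nonzero polynomial in [t] for [w != 0],
   so a common non-root of the product works for all [w]. *)
Lemma exists_dotr_neq0 (I : finType) (P : pred I) (w : I -> 'rV[R]_r) :
  (forall l, P l -> w l != 0) -> exists c, forall l, P l -> dotr c (w l) != 0.
Proof.
case: r w => [|r'] w w_neq0.
  by exists 0 => l Pl; have := w_neq0 l Pl; rewrite (thinmx0 (w l)) eqxx.
pose pw l : {poly R} := \poly_(i < r'.+1) w l 0 (inord i).
have pw_neq0 l : P l -> pw l != 0.
  move=> Pl; apply: contra (w_neq0 l Pl) => /eqP pw0; apply/eqP/rowP => k.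
  have := congr1 (fun q : {poly R} => q`_k) pw0.
  by rewrite coef_poly ltn_ord inord_val coef0 !mxE.
have [t nonroot_t] := exists_nonroot (introT (prodf_neq0 _ _) pw_neq0).
exists (\row_k t ^+ k) => l Pl.
suff -> : dotr (\row_k t ^+ k) (w l) = (pw l).[t].
  by move: nonroot_t; rewrite /root horner_prod => /prodf_neq0; apply.
by rewrite horner_poly; apply: eq_bigr => k _; rewrite inord_val mxE.
Qed.

Lemma pos_multiple_dotrE u v x : dotr u v = 1 ->
  pos_multiple x v = (x == dotr u x *: v) && (0 < dotr u x).
Proof.
move=> uv1; apply/pos_multipleP/andP => [[mu mu_gt0 ->]|[/eqP def_x ux_gt0]].
  by rewrite dotrZr uv1 mulr1 eqxx.
by exists (dotr u x).
Qed.

Lemma neg_multiple_dotrE u v x : dotr u v = 1 ->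
  pos_multiple (- x) v = (x == dotr u x *: v) && (dotr u x < 0).
Proof.
by move=> uv1; rewrite (pos_multiple_dotrE _ uv1) linearN /= scaleNr eqr_opp oppr_gt0.
Qed.

End DotProductTheory.

Section RayBalance.
Variables (R : realFieldType) (r n : nat) (V : 'I_n -> 'rV[R]_r).
Hypothesis sum_sgr_dotr : forall d, \sum_l Num.sg (dotr d (V l)) = 0.

Lemma ray_card_balanced i : V i != 0 -> #|pos_ray V i| = #|neg_ray V i|.
Proof.
move=> Vi_neq0; set v := V i; set u := (dotr v v)^-1 *: v.
have uv1 : dotr u v = 1 by rewrite dotrZl mulVf ?gt_eqF ?dotr_self_gt0.
pose off_line l := V l - dotr u (V l) *: v.
have [c c_off_line] := exists_dotr_neq0 (fun l (nz : off_line l != 0) => nz).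
pose phi l := dotr c (off_line l).
have phi_eq0 l : (phi l == 0) = (V l == dotr u (V l) *: v).
  rewrite -[RHS]subr_eq0 -/(off_line l) /phi.
  have [->|nz] := eqVneq (off_line l) 0; first by rewrite linear0 eqxx.
  exact: negbTE (c_off_line _ nz).
have kernel_sum0 : \sum_(l | phi l == 0) Num.sg (dotr u (V l)) = 0.
  apply: sum_sgr_kernel => t.
  rewrite -[RHS](sum_sgr_dotr (c - dotr c v *: u + t *: u)); apply: eq_bigr => l _.
  by rewrite /phi dotrDl dotrBl (dotrZl (dotr c v)) (dotrZl t) linearB /= dotrZr mulrC.
move/eqP: kernel_sum0; rewrite sum_sgr subr_eq0 eqr_nat => /eqP card_eq.
have pos_rayE : pos_ray V i = [set l | phi l == 0 & 0 < dotr u (V l)].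
  by apply/setP => l; rewrite !inE phi_eq0 (pos_multiple_dotrE _ uv1).
have neg_rayE : neg_ray V i = [set l | phi l == 0 & dotr u (V l) < 0].
  by apply/setP => l; rewrite !inE phi_eq0 (neg_multiple_dotrE _ uv1).
by rewrite pos_rayE neg_rayE.
Qed.

End RayBalance.

Theorem mainTheorem9 (R : realType) (r n : nat) (V : 'I_n -> 'rV[R]_r) :
  DD V = 0%N <-> centrally_symmetric_up_to_rescaling V.
Proof.
split=> [/DD_eq0P disc0|]; last exact: centrally_symmetric_DD_eq0.
have sum_sgr_dotr d : \sum_l Num.sg (dotr d (V l)) = 0 by apply/disc_eq0/disc0.
apply: ray_balanced_partition => [k|k]; first by rewrite inE.
rewrite inE => Vk_neq0.
rewrite (setIidPl (pos_ray_sub Vk_neq0)) (setIidPl (neg_ray_sub Vk_neq0)).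
exact: ray_card_balanced.
Qed.
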